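(* Let $p$ be a prime, $s\geq3$, $n\geq1$, $K\in\{\mathbb Z,\mathbb Z_p,\mathbb Z_{(p)}\}$, $F$ a field containing $K$, and $G=\langle a\rangle\cong C_{p^s}$. Let $\Delta$ be the $K$-representation of $G$ given by $\Delta(a)=\begin{pmatrix}\Delta_1(a)&U(a)\\0&\Delta_2(a)\end{pmatrix}$, where $\Delta_1=\delta_0^{(n)}\oplus\delta_1^{(n)}$, $\Delta_2=\delta_2^{(n)}\oplus\delta_s^{(n)}$, and $U(a)=\begin{pmatrix}E_n\otimes\langle1\rangle_0&J_n\otimes\langle1\rangle_0\\ E_n\otimes\langle1\rangle_1&J_n\otimes\langle1\rangle_1\end{pmatrix}$. Let $M_\Delta=K^N$ be the corresponding lattice with standard basis, let $v$ be the first basis vector, and define $T_\Delta:G\to\widehat{M_\Delta}$ by $T_\Delta(a^j)=jp^{-s}v+M_\Delta$ for $j=0,1,\dots,p^s-1$. Then $T_\Delta$ is a $1$-cocycle, and $T_\Delta$ is not cohomologous to zero at the element $b=a^{p^{s-1}}$ of order $p$, i.e. there is no $x\in FM_\Delta$ with $T_\Delta(b)=(b-1)x+M_\Delta$.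
   Context: For $t\geq0$ let $K_t=K[x]/(\Phi_{p^t}(x))$ ($\Phi_{p^t}$ the $p^t$-th cyclotomic polynomial; $K_0=K$), $\xi_t$ the image of $x$ (a primitive $p^t$-th root of unity), so $\xi_{t-1}=\xi_t^p$. Define ordered $K$-bases $B_0=\{1\}$, $B_1=(1,\xi_1,\dots,\xi_1^{p-2})$, and for $j\geq2$, $B_j$ is the concatenation of $\xi_j^0B_{j-1},\xi_j^1B_{j-1},\dots,\xi_j^{p-1}B_{j-1}$. For $t\leq s$, $\delta_t$ is the matrix representation of $G$ on $K_t$ (with $a$ acting as multiplication by $\xi_t$) in the basis $B_t$ (columns = coordinates of images of basis vectors); $\delta_t^{(n)}$ is the direct sum of $n$ copies. $E_n$ is the identity and $J_n$ the $n\times n$ Jordan block with ones on the diagonal (and superdiagonal). For $\omega\in K_t$ ($t=0,1$), $\langle\omega\rangle_t$ denotes the matrix with $|B_t|$ rows all of whose columns are zero except the last, which is the coordinate column of $\omega$ in $B_t$; in $E_n\otimes\langle\cdot\rangle_t$ its number of columns is $\deg\delta_2$, in $J_n\otimes\langle\cdot\rangle_t$ it is $\deg\delta_s$. $FM=F\otimes_KM$, $\widehat M=FM/M$ with $g(x+M)=gx+M$; a $1$-cocycle is $T:G\to\widehat M$ with $T(gh)=gT(h)+T(g)$. *)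

From HB Require Import structures.
From mathcomp Require Import all_boot all_order all_algebra.
From mathcomp Require Import cyclotomic.
From mathcomp Require Import mxtens.
Set Implicit Arguments. Unset Strict Implicit. Unset Printing Implicit Defensive.
Import Order.TTheory GRing.Theory Num.Theory.
Local Open Scope ring_scope.

(* deg delta_t = [K_t : K] = phi(p^t) (= 1 for t = 0) *)
Definition dg (p t : nat) : nat := totient (p ^ t).

(* bexp p t i = the exponent e such that the i-th element of the ordered basis
   B_t is xi_t^e.  B_0 = (1), B_1 = (1, xi_1, ..., xi_1^(p-2)), and for t >= 2
   B_t = xi_t^0 B_(t-1) ++ ... ++ xi_t^(p-1) B_(t-1), where xi_(t-1) = xi_t^p. *)
Fixpoint bexp (p t i : nat) {struct t} : nat :=
  match t with
  | 0 => 0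
  | t'.+1 => if t' is 0 then i
             else (i %/ dg p t' + p * bexp p t' (i %% dg p t'))%N
  end.

(* coordinate column of (the class of) w in K_t = K[x]/(Phi_(p^t)), basis B_t *)
Definition coordB (p t : nat) (w : {poly int}) : 'cV[int]_(dg p t) :=
  \col_i ((w %% 'Phi_(p ^ t))`_(bexp p t i)).

(* delta_t(a): multiplication by xi_t on K_t in the basis B_t
   (columns = coordinates of the images of the basis vectors) *)
Definition delta (p t : nat) : 'M[int]_(dg p t) :=
  \matrix_(i, j) (coordB p t ('X ^+ (bexp p t j).+1) i 0).

Definition angle (p t : nat) (w : {poly int}) (c : nat) : 'M[int]_(dg p t, c) :=
  \matrix_(i, j) (if val j == c.-1 then coordB p t w i 0 else 0).

Definition jordan (n : nat) : 'M[int]_n :=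
  \matrix_(i, j) (if (val i == val j) || ((val i).+1 == val j) then 1 else 0).

Definition deltan (p t n : nat) : 'M[int]_(n * dg p t) :=
  (1%:M : 'M[int]_n) *t delta p t.

Definition Delta1 (p n : nat) := block_mx (deltan p 0 n) 0 0 (deltan p 1 n).
Definition Delta2 (p s n : nat) := block_mx (deltan p 2 n) 0 0 (deltan p s n).

Definition Umx (p s n : nat) :
  'M[int]_(n * dg p 0 + n * dg p 1, n * dg p 2 + n * dg p s) :=
  block_mx ((1%:M : 'M[int]_n) *t angle p 0 1 (dg p 2))
           (jordan n *t angle p 0 1 (dg p s))
           ((1%:M : 'M[int]_n) *t angle p 1 1 (dg p 2))
           (jordan n *t angle p 1 1 (dg p s)).

Definition Ndim (p s n : nat) : nat :=
  ((n * dg p 0 + n * dg p 1) + (n * dg p 2 + n * dg p s))%N.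

Definition DeltaA (p s n : nat) : 'M[int]_(Ndim p s n) :=
  block_mx (Delta1 p n) (Umx p s n) 0 (Delta2 p s n).

Definition isZ (F : fieldType) (K : F -> Prop) : Prop :=
  forall x, K x <-> exists z : int, x = z%:~R.

Definition isZloc (p : nat) (F : fieldType) (K : F -> Prop) : Prop :=
  forall x, K x <-> exists a b : int, ~~ (p%:Z %| b)%Z /\ x = a%:~R / b%:~R.

(* K is (a copy of) the ring Z_p of p-adic integers inside F: a subring such
   that K / p^k K = Z / p^k Z for all k (p not a unit, residues represented by
   integers), which is p-adically separated and complete; these properties
   characterize Z_p = lim Z/p^k Z up to isomorphism. *)
Definition isZpadic (p : nat) (F : fieldType) (K : F -> Prop) : Prop :=
  [/\ [/\ K 1, (forall x y, K x -> K y -> K (x - y)) &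
          (forall x y, K x -> K y -> K (x * y))],
      ~ K (p%:R)^-1,
      (forall x, K x -> exists i : int, K ((x - i%:~R) / p%:R)),
      (forall x, K x -> (forall k, K (x / (p ^ k)%:R)) -> x = 0) &
      (forall c : nat -> F, (forall k, K (c k)) ->
         (forall k, K ((c k.+1 - c k) / (p ^ k)%:R)) ->
         exists2 y, K y & forall k, K ((y - c k) / (p ^ k)%:R))].

Definition Kspec (p : nat) (F : fieldType) (K : F -> Prop) : Prop :=
  isZ K \/ isZloc p K \/ isZpadic p K.

Definition vfirst (F : fieldType) (N : nat) : 'cV[F]_N :=
  \col_i (if val i == 0%N then 1 else 0).

(* T_Delta(a^j) = j p^(-s) v  (representative in F M_Delta), 0 <= j < p^s;
   general exponents are reduced mod p^s *)
Definition Tdelta (F : fieldType) (p s n : nat) (j : nat) : 'cV[F]_(Ndim p s n) :=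
  (((j %% p ^ s)%N)%:R / (p ^ s)%:R) *: vfirst F (Ndim p s n).

Definition inM (F : fieldType) (K : F -> Prop) (N : nat) (x : 'cV[F]_N) : Prop :=
  forall i, K (x i 0).

Definition DeltaF (F : fieldType) (p s n : nat) : 'M[F]_(Ndim p s n) :=
  map_mx intr (DeltaA p s n).

From HB Require Import structures.
From mathcomp Require Import all_boot all_order all_algebra.
From mathcomp Require Import cyclotomic mxtens zify ring.
Import Order.TTheory GRing.Theory Num.Theory.
Set Implicit Arguments.
Unset Strict Implicit.
Unset Printing Implicit Defensive.
Local Open Scope ring_scope.

(* The first column of Delta(a) is v, so the cocycle defect
   T(a^j a^k) - a^j T(a^k) - T(a^j) is -((j + k) %/ p^s) v, which lies in M.

   For the second claim we build an integral row vector lambda with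
   lambda Delta(b) = lambda and lambda v = 1: applied to T(b) - (b - 1) x, which
   would lie in M, it gives p^(s-1) / p^s = 1/p, which is not in K.  Read
   blockwise as linear forms on the K_t, lambda is
   (e_1 (x) "value at 1", e_1 (x) -"sum of coordinates", 0, e_1 J_n (x) beta).
   Under Delta(a) the first two forms get multiplied by x, and U(a) feeds into
   the last two blocks the last coordinate form ell times p at the steps k with
   p | k + 1, times 0 otherwise.  After m = p^(s-1) steps the accumulated
   multiplier is p S with S = sum_(i < p^(s-2)) x^(p i), which is divisible by
   Phi_(p^2), so the third block returns to 0; beta(w) = ell(H w) is chosen so
   that the fourth block returns as well. *)

Definition geomsum {R : pzRingType} (z : R) (l : nat) : R := \sum_(i < l) z ^+ i.

Lemma geomsumS (R : pzRingType) (z : R) l : geomsum z l.+1 = 1 + z * geomsum z l.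
Proof.
rewrite /geomsum big_ord_recl expr0 mulr_sumr.
by congr (_ + _); apply: eq_bigr => i _; rewrite exprS.
Qed.

Lemma mul_geomsum (R : pzRingType) (z : R) l : (z - 1) * geomsum z l = z ^+ l - 1.
Proof. by rewrite subrX1. Qed.

Lemma geomsumD (R : pzRingType) (z : R) m k :
  geomsum z (m + k) = geomsum z m + z ^+ m * geomsum z k.
Proof.
rewrite /geomsum big_split_ord mulr_sumr; congr (_ + _).
by apply: eq_bigr => i _; rewrite exprD.
Qed.

Lemma geomsumM (R : comPzRingType) (z : R) a b :
  geomsum z (a * b) = geomsum z a * geomsum (z ^+ a) b.
Proof.
elim: b => [|b IH]; first by rewrite muln0 /geomsum !big_ord0 mulr0.
by rewrite mulnS geomsumD IH geomsumS; ring.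
Qed.

Section CyclotomicPrimePower.
Variable p : nat.
Hypothesis p_pr : prime p.

Lemma prod_Cyclotomic_pexp t :
  \prod_(j < t.+1) 'Phi_(p ^ j) = 'X^(p ^ t) - 1 :> {poly int}.
Proof.
have p_gt0 := prime_gt0 p_pr.
rewrite -prod_Cyclotomic ?expn_gt0 ?p_gt0 //.
rewrite (perm_big [seq p ^ j | j <- iota 0 t.+1])%N; last first.
  apply: uniq_perm; first exact: divisors_uniq.
    by rewrite map_inj_uniq ?iota_uniq //; apply: expnI; apply: prime_gt1.
  move=> d; rewrite -dvdn_divisors ?expn_gt0 ?p_gt0 //.
  apply/(dvdn_pfactor _ _ p_pr)/mapP => [[j jt ->]|[j]].
    by exists j => //; rewrite mem_iota add0n ltnS.
  by rewrite mem_iota add0n ltnS => jt ->; exists j.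
by rewrite big_map -(big_mkord xpredT (fun j => 'Phi_(p ^ j))).
Qed.

Lemma Cyclotomic_pexpS_mul t :
  'Phi_(p ^ t.+1) * ('X^(p ^ t) - 1) = 'X^(p ^ t.+1) - 1 :> {poly int}.
Proof. by rewrite -!prod_Cyclotomic_pexp (big_ord_recr t.+1) mulrC. Qed.

Lemma Cyclotomic_pexpS t : 'Phi_(p ^ t.+1) = geomsum ('X^(p ^ t) : {poly int}) p.
Proof.
apply: (@mulIf _ ('X^(p ^ t) - 1)).
  by rewrite -size_poly_eq0 size_XnsubC // expn_gt0 prime_gt0.
by rewrite Cyclotomic_pexpS_mul mulrC mul_geomsum -exprM expnSr.
Qed.

End CyclotomicPrimePower.

Lemma Cyclotomic1 : 'Phi_1 = 'X - 1 :> {poly int}.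
Proof. by have := prod_Cyclotomic (isT : (0 < 1)%N); rewrite big_seq1 expr1. Qed.

Section BasisExponents.
Variable p : nat.
Hypothesis p_pr : prime p.

Lemma dg_gt0 t : (0 < dg p t)%N.
Proof. by rewrite /dg totient_gt0 expn_gt0 prime_gt0. Qed.

Lemma dg1 : dg p 1 = p.-1.
Proof. by rewrite /dg totient_pfactor // muln1. Qed.

Lemma dgSS t : dg p t.+2 = (p * dg p t.+1)%N.
Proof. by rewrite /dg !totient_pfactor //= expnS; lia. Qed.

Lemma bexpSS t i :
  bexp p t.+2 i = (i %/ dg p t.+1 + p * bexp p t.+1 (i %% dg p t.+1))%N.
Proof. by []. Qed.

Lemma bexp_lt t i : (i < dg p t)%N -> (bexp p t i < dg p t)%N.
Proof.
elim: t i => [|[|t] IH] i //; rewrite bexpSS dgSS => lt_i.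
have lt_q : (i %/ dg p t.+1 < p)%N by rewrite ltn_divLR ?dg_gt0 // mulnC.
have lt_r : (bexp p t.+1 (i %% dg p t.+1) < dg p t.+1)%N.
  by apply: IH; rewrite ltn_mod dg_gt0.
nia.
Qed.

Lemma bexp_inj t i j : (i < dg p t)%N -> (j < dg p t)%N ->
  bexp p t i = bexp p t j -> i = j.
Proof.
elim: t i j => [|[|t] IH] i j //; first by rewrite !ltnS !leqn0 => /eqP-> /eqP->.
rewrite !bexpSS dgSS => lt_i lt_j E.
have d_gt0 := dg_gt0 t.+1.
have lt_qi : (i %/ dg p t.+1 < p)%N by rewrite ltn_divLR // mulnC.
have lt_qj : (j %/ dg p t.+1 < p)%N by rewrite ltn_divLR // mulnC.
have /eqP[Er Eq] : (bexp p t.+1 (i %% dg p t.+1), i %/ dg p t.+1)%N ==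
                   (bexp p t.+1 (j %% dg p t.+1), j %/ dg p t.+1)%N.
  by rewrite -(eq_addl_mul _ _ lt_qi lt_qj) !(mulnC _ p) addnC E addnC.
have Emod := IH _ _ (ltn_pmod _ d_gt0) (ltn_pmod _ d_gt0) Er.
by rewrite (divn_eq i (dg p t.+1)) (divn_eq j (dg p t.+1)) Eq Emod.
Qed.

Definition bexp_ord t (j : 'I_(dg p t)) : 'I_(dg p t) := Ordinal (bexp_lt (ltn_ord j)).

Lemma bexp_ord_inj t : injective (@bexp_ord t).
Proof. by move=> i j /(congr1 val)/(bexp_inj (ltn_ord i) (ltn_ord j))/val_inj. Qed.

End BasisExponents.

Section Coordinates.
Variables (p t : nat).
Hypothesis p_pr : prime p.
Local Notation Phi := ('Phi_(p ^ t) : {poly int}).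
Local Notation d := (dg p t).
Local Notation coord := (coordB p t).

Let Phi_lead_unit : lead_coef Phi \is a GRing.unit.
Proof. by rewrite (monicP (Cyclotomic_monic _)) unitr1. Qed.

Let Phi_neq0 : Phi != 0.
Proof. by rewrite -size_poly_eq0 size_Cyclotomic. Qed.

Lemma coordBD w1 w2 : coord (w1 + w2) = coord w1 + coord w2.
Proof.
by apply/matrixP => i j; rewrite !mxE (Pdiv.IdomainUnit.modpD Phi_lead_unit) coefD.
Qed.

Lemma coordBZ (c : int) w : coord (c *: w) = c *: coord w.
Proof.
by apply/matrixP => i j; rewrite !mxE (Pdiv.IdomainUnit.modpZl Phi_lead_unit) coefZ.
Qed.

Lemma coordB0 : coord 0 = 0.
Proof. by apply/matrixP => i j; rewrite !mxE Pdiv.CommonIdomain.mod0p coef0. Qed.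

Lemma coordB_sum (I : Type) (r : seq I) (P : pred I) (f : I -> {poly int}) :
  coord (\sum_(i <- r | P i) f i) = \sum_(i <- r | P i) coord (f i).
Proof. exact: (big_morph _ coordBD coordB0). Qed.

Lemma coordB_addmul w h : coord (w + h * Phi) = coord w.
Proof.
have coord_mod v : coord (v %% Phi) = coord v.
  by apply/matrixP => i j; rewrite !mxE Pdiv.CommonIdomain.modp_id.
by rewrite coordBD -(coord_mod (h * Phi)) Pdiv.CommonIdomain.modp_mull coordB0 addr0.
Qed.

Lemma coordB_mulmod q w : coord (q * (w %% Phi)) = coord (q * w).
Proof.
rewrite [in RHS](Pdiv.IdomainUnit.divp_eq Phi_lead_unit w) mulrDr addrC mulrA.
by rewrite coordB_addmul.
Qed.

Lemma coordB_Xn e i : (e < d)%N -> coord 'X^e i 0 = (bexp p t i == e)%:R.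
Proof.
move=> lt_e; rewrite mxE Pdiv.CommonIdomain.modp_small ?coefXn //.
by rewrite size_polyXn size_Cyclotomic.
Qed.

Lemma coordB_basis (j : 'I_d) : coord 'X^(bexp p t j) = delta_mx j 0.
Proof.
apply/matrixP => i k; rewrite ord1 coordB_Xn ?bexp_lt // !mxE eqxx andbT.
suff -> : (bexp p t i == bexp p t j) = (i == j) by [].
by apply/eqP/eqP => [/(bexp_inj p_pr (ltn_ord i) (ltn_ord j))/val_inj|->].
Qed.

Lemma modp_basis_expansion w :
  \sum_(j < d) coord w j 0 *: 'X^(bexp p t j) = w %% Phi.
Proof.
have -> : w %% Phi = \sum_(e < d) (w %% Phi)`_e *: 'X^e.
  rewrite -poly_def; apply/polyP => k; rewrite coef_poly.
  case: ltnP => // le_d_k; rewrite nth_default //; apply: leq_trans le_d_k.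
  by rewrite -ltnS -size_Cyclotomic Pdiv.CommonIdomain.ltn_modp Phi_neq0.
by rewrite [RHS](reindex_inj (@bexp_ord_inj _ p_pr t)); apply: eq_bigr => j _; rewrite mxE.
Qed.

Lemma delta_coordB w : delta p t *m coord w = coord ('X * w).
Proof.
rewrite -coordB_mulmod -modp_basis_expansion mulr_sumr coordB_sum.
apply/matrixP => i k; rewrite ord1 summxE mxE; apply: eq_bigr => j _.
by rewrite -scalerAr coordBZ [in RHS]mxE mulrC -exprS [delta _ _ _ _]mxE.
Qed.

(* u read as a linear form on K_t = Z[x]/(Phi_(p^t)), evaluated at the class of w *)
Definition pairB (u : 'rV[int]_d) (w : {poly int}) : int := (u *m coord w) 0 0.

Lemma pairBDl u v w : pairB (u + v) w = pairB u w + pairB v w.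
Proof. by rewrite /pairB mulmxDl mxE. Qed.

Lemma pairBZl (c : int) u w : pairB (c *: u) w = c * pairB u w.
Proof. by rewrite /pairB -scalemxAl mxE. Qed.

Lemma pairB0l w : pairB 0 w = 0.
Proof. by rewrite /pairB mul0mx mxE. Qed.

Lemma pairBDr u w1 w2 : pairB u (w1 + w2) = pairB u w1 + pairB u w2.
Proof. by rewrite /pairB coordBD mulmxDr mxE. Qed.

Lemma pairBZr u (c : int) w : pairB u (c *: w) = c * pairB u w.
Proof. by rewrite /pairB coordBZ -scalemxAr mxE. Qed.

Lemma pairB0r u : pairB u 0 = 0.
Proof. by rewrite /pairB coordB0 mulmx0 mxE. Qed.

Lemma pairBNr u w : pairB u (- w) = - pairB u w.
Proof. by rewrite -scaleN1r pairBZr mulN1r. Qed.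

Lemma pairB_sumr u (I : Type) (r : seq I) (P : pred I) (f : I -> {poly int}) :
  pairB u (\sum_(i <- r | P i) f i) = \sum_(i <- r | P i) pairB u (f i).
Proof. by rewrite /pairB coordB_sum mulmx_sumr summxE. Qed.

Lemma pairB_addmul u w h : pairB u (w + h * Phi) = pairB u w.
Proof. by rewrite /pairB coordB_addmul. Qed.

Lemma pairB_mulmod u q w : pairB u (q * (w %% Phi)) = pairB u (q * w).
Proof. by rewrite /pairB coordB_mulmod. Qed.

Lemma pairB_delta u w : pairB (u *m delta p t) w = pairB u ('X * w).
Proof. by rewrite /pairB -mulmxA delta_coordB. Qed.

Lemma pairB_basis u (j : 'I_d) : pairB u 'X^(bexp p t j) = u 0 j.
Proof.
rewrite /pairB coordB_basis mxE (bigD1 j) //= mxE !eqxx mulr1 big1 ?addr0 //.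
by move=> i /negbTE neq_ij; rewrite mxE neq_ij mulr0.
Qed.

Lemma pairB_basis_inj u v :
  (forall j : 'I_d, pairB u 'X^(bexp p t j) = pairB v 'X^(bexp p t j)) -> u = v.
Proof. by move=> E; apply/matrixP => i j; rewrite ord1 -!pairB_basis E. Qed.

End Coordinates.

Arguments pairB : clear implicits.

Definition lastrow (c : nat) : 'rV[int]_c := \row_j (val j == c.-1)%:R.

Lemma mulmx_angle p t (u : 'rV[int]_(dg p t)) w c :
  u *m angle p t w c = pairB p t u w *: lastrow c.
Proof.
have -> : angle p t w c = coordB p t w *m lastrow c.
  apply/matrixP => i j; rewrite !mxE big_ord1 !mxE.
  by case: eqP; rewrite ?mulr1 ?mulr0.
by rewrite mulmxA [u *m _]mx11_scalar mul_scalar_mx.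
Qed.

Lemma tensmxDr (R : pzRingType) m1 n1 m2 n2 (A : 'M[R]_(m1, n1)) (B C : 'M[R]_(m2, n2)) :
  A *t (B + C) = A *t B + A *t C.
Proof. by apply/matrixP => i j; rewrite !mxE mulrDr. Qed.

Section BlockRows.
Variables p s n : nat.
Local Notation N := n.+1.

Definition erow : 'rV[int]_N := delta_mx 0 0.

(* Row vectors of this shape are stable under right multiplication by Delta(a):
   the factor e_1 J_n in the last block is what the J_n-blocks of U(a) make of e_1. *)
Definition blockrow (a0 : 'rV_(dg p 0)) (a1 : 'rV_(dg p 1))
    (b2 : 'rV_(dg p 2)) (bs : 'rV_(dg p s)) : 'rV[int]_(Ndim p s N) :=
  row_mx (row_mx (erow *t a0) (erow *t a1))
         (row_mx (erow *t b2) ((erow *m jordan N) *t bs)).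

Lemma blockrow_mulDelta a0 a1 b2 bs :
  blockrow a0 a1 b2 bs *m DeltaA p s N =
  blockrow (a0 *m delta p 0) (a1 *m delta p 1)
    (a0 *m angle p 0 1 (dg p 2) + a1 *m angle p 1 1 (dg p 2) + b2 *m delta p 2)
    (a0 *m angle p 0 1 (dg p s) + a1 *m angle p 1 1 (dg p s) + bs *m delta p s).
Proof.
rewrite /blockrow /DeltaA /Delta1 /Delta2 /Umx /deltan.
rewrite !mul_row_block !mulmx0 !addr0 !add0r.
rewrite !(tensmx_mul erow a0) !(tensmx_mul erow a1) (tensmx_mul erow b2).
rewrite (tensmx_mul (erow *m jordan N) bs) !mulmx1 add_row_mx.
by rewrite !tensmxDr.
Qed.

End BlockRows.

Arguments blockrow : clear implicits.

Section LinearForms.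
Variable p : nat.
Hypothesis p_pr : prime p.

Lemma Xn_mod_Cyclotomic1 k : exists h : {poly int}, 'X^k = 1 + h * 'Phi_(p ^ 0).
Proof. by exists (geomsum 'X k); rewrite expn0 Cyclotomic1 mulrC mul_geomsum subrKC. Qed.

Lemma Xn_mod_Cyclotomicp k :
  exists h : {poly int}, 'X^k = 'X^(k %% p) + h * 'Phi_(p ^ 1).
Proof.
have E := Cyclotomic_pexpS_mul p_pr 0; rewrite expn0 expn1 expr1 in E.
have G : ('X^p : {poly int}) ^+ (k %/ p) = 1 + ('X^p - 1) * geomsum 'X^p (k %/ p).
  by rewrite mul_geomsum addrC subrK.
exists ('X^(k %% p) * (geomsum 'X^p (k %/ p) * ('X - 1))).
by rewrite {1}(divn_eq k p) exprD mulnC exprM G -E; ring.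
Qed.

Lemma Xpred_mod_Cyclotomicp : 'X^(p.-1) = - \sum_(j < p.-1) 'X^j + 1 * 'Phi_(p ^ 1).
Proof.
rewrite (Cyclotomic_pexpS p_pr 0) expn0 expr1 /geomsum.
rewrite -[in RHS](prednK (prime_gt0 p_pr)) big_ord_recr /=; ring.
Qed.

Definition form0 : 'rV[int]_(dg p 0) := const_mx 1.
Definition form1 : 'rV[int]_(dg p 1) := const_mx (-1).

Lemma pairB_form0 k : pairB p 0 form0 'X^k = 1.
Proof.
have [h ->] := Xn_mod_Cyclotomic1 k; rewrite pairB_addmul.
by have := pairB_basis p_pr form0 ord0; rewrite expr0 mxE.
Qed.

Lemma pairB_form1_small r : (r < p.-1)%N -> pairB p 1 form1 'X^r = -1.
Proof.
rewrite -(dg1 p_pr) => lt_r.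
by rewrite -[r]/(bexp p 1 (Ordinal lt_r)) pairB_basis // mxE.
Qed.

Lemma dvdn_S_modn k : (p %| k.+1)%N = ((k %% p).+1 == p).
Proof.
have lt_r : (k %% p < p)%N by rewrite ltn_mod prime_gt0.
rewrite {1}(divn_eq k p) -addnS dvdn_addr ?dvdn_mull //.
apply/idP/eqP => [dvd_p|->]; last exact: dvdnn.
by apply/eqP; rewrite eqn_leq lt_r dvdn_leq.
Qed.

Lemma pairB_form1 k : pairB p 1 form1 'X^k = if (p %| k.+1)%N then (p.-1)%:Z else -1.
Proof.
have [h ->] := Xn_mod_Cyclotomicp k; rewrite pairB_addmul dvdn_S_modn.
have lt_r : (k %% p < p)%N by rewrite ltn_mod prime_gt0.
case: eqP => [E|/eqP ne]; last first.
  by apply: pairB_form1_small; rewrite -ltnS prednK ?prime_gt0 // ltn_neqAle ne.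
have -> : (k %% p = p.-1)%N by rewrite -[in RHS]E.
rewrite Xpred_mod_Cyclotomicp pairB_addmul pairBNr pairB_sumr.
rewrite (eq_bigr (fun _ => -1)) => [|j _]; last exact: pairB_form1_small.
by rewrite sumr_const card_ord mulNrn opprK natz.
Qed.

(* The coefficient that U(a) feeds from the first two blocks into each of the
   last two at step k: the sum of form0 and form1 at x^k. *)
Definition ucoef (k : nat) : int := if (p %| k.+1)%N then p%:Z else 0.

Lemma pairB_form01 k : pairB p 0 form0 'X^k + pairB p 1 form1 'X^k = ucoef k.
Proof.
rewrite pairB_form0 pairB_form1 /ucoef; case: ifP => _; last by rewrite subrr.
by have := prime_gt0 p_pr; lia.
Qed.

Fixpoint upoly (k : nat) : {poly int} :=
  if k is k'.+1 then (ucoef k')%:P + upoly k' * 'X else 0.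

Lemma upolyE k : upoly k = p%:R * (geomsum 'X^p (k %/ p) * 'X^(k %% p)).
Proof.
have p_gt0 := prime_gt0 p_pr.
elim: k => [|k IH]; first by rewrite div0n /geomsum big_ord0 mul0r mulr0.
rewrite /= IH /ucoef divnS // modnS dvdn_S_modn; case: eqP => [E|_].
  have EX : 'X^p = 'X^(k %% p) * 'X :> {poly int} by rewrite -exprSr E.
  by rewrite add1n geomsumS expr0 mulr1 EX -natz rmorph_nat; ring.
by rewrite add0n exprS polyC0; ring.
Qed.

End LinearForms.

Lemma pairB_delta_pow p t (p_pr : prime p) u k w :
  pairB p t (u *m delta p t ^+ k) w = pairB p t u ('X^k * w).
Proof.
elim: k w => [|k IH] w; first by rewrite expr0 mulmx1 mul1r.
by rewrite exprSr -mulmxE mulmxA pairB_delta // IH mulrA -exprSr.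
Qed.

(* The last two components of lambda Delta(a)^k evolve by this recursion. *)
Fixpoint utail p t (b : 'rV[int]_(dg p t)) (k : nat) : 'rV[int]_(dg p t) :=
  if k is k'.+1 then ucoef p k' *: lastrow (dg p t) + utail b k' *m delta p t
  else b.

Lemma pairB_utail p t (p_pr : prime p) b k w :
  pairB p t (utail b k) w =
  pairB p t b ('X^k * w) + pairB p t (lastrow (dg p t)) (upoly p k * w).
Proof.
elim: k w => [|k IH] w; first by rewrite expr0 mul1r mul0r pairB0r addr0.
rewrite /= pairBDl pairBZl pairB_delta // IH mulrDl pairBDr mul_polyC pairBZr.
by rewrite !mulrA -exprSr addrCA.
Qed.

Section Orbit.
Variables p s n : nat.
Hypothesis p_pr : prime p.
Hypothesis s_ge3 : (3 <= s)%N.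
Local Notation m := (p ^ s.-1)%N.
Local Notation ell t := (lastrow (dg p t)).

Definition Spoly : {poly int} := geomsum 'X^p (p ^ s.-2).
(* Multiplying the sum by x^m - 1 gives Phi_(p^s) - p, which is what makes
   x^m H + p S = H modulo Phi_(p^s). *)
Definition Hpoly : {poly int} := (\sum_(k < p) geomsum 'X^m k) * Spoly.

Definition bform : 'rV[int]_(dg p s) :=
  \row_j pairB p s (ell s) (Hpoly * 'X^(bexp p s j)).

Lemma pairB_bform w : pairB p s bform w = pairB p s (ell s) (Hpoly * w).
Proof.
rewrite -pairB_mulmod // -modp_basis_expansion // mulr_sumr pairB_sumr.
rewrite [LHS]mxE; apply: eq_bigr => j _.
by rewrite mxE -scalerAr pairBZr mulrC.
Qed.

Lemma Spoly_mod_Cyclotomic : exists h : {poly int}, Spoly = h * 'Phi_(p ^ 2).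
Proof.
rewrite /Spoly; case: s s_ge3 => [|[|[|s']]] // _ /=.
exists (geomsum 'X^(p ^ 2) (p ^ s')).
by rewrite expnS geomsumM (Cyclotomic_pexpS p_pr 1) expn1 -exprM mulnn mulrC.
Qed.

Lemma Hpoly_period :
  Hpoly * 'X^m + p%:R * Spoly = Hpoly + Spoly * 'Phi_(p ^ s).
Proof.
have Phi_s : 'Phi_(p ^ s) = geomsum ('X^m : {poly int}) p.
  by rewrite -(Cyclotomic_pexpS p_pr) prednK // (leq_trans _ s_ge3).
have EQ : (\sum_(k < p) geomsum ('X^m : {poly int}) k) * ('X^m - 1) =
          geomsum 'X^m p - p%:R.
  rewrite mulr_suml (eq_bigr (fun k : 'I_p => 'X^m ^+ k - 1)) => [|k _].
    by rewrite sumrB sumr_const card_ord.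
  by rewrite mulrC mul_geomsum.
by rewrite Phi_s /Hpoly -[geomsum _ p](subrK (p%:R : {poly int})) -EQ; ring.
Qed.

Definition lambda (k : nat) : 'rV[int]_(Ndim p s n.+1) :=
  blockrow p s n (form0 p *m delta p 0 ^+ k) (form1 p *m delta p 1 ^+ k)
    (utail (0 : 'rV_(dg p 2)) k) (utail bform k).

Lemma lambda_mulDelta k : lambda k *m DeltaA p s n.+1 = lambda k.+1.
Proof.
rewrite blockrow_mulDelta /lambda !mulmx_angle !pairB_delta_pow // !mulr1.
by rewrite -!scalerDl pairB_form01 // -!mulmxA !mulmxE -!exprSr.
Qed.

Lemma lambda_mulDelta_pow k : lambda 0 *m DeltaA p s n.+1 ^+ k = lambda k.
Proof.
elim: k => [|k IH]; first by rewrite mulmx1.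
by rewrite exprSr -mulmxE mulmxA IH lambda_mulDelta.
Qed.

Lemma upoly_period : upoly p m = p%:R * Spoly.
Proof.
rewrite upolyE // /Spoly; case: s s_ge3 => [|[|s']] // _ /=.
by rewrite expnSr mulnK ?prime_gt0 // modnMl expr0 mulr1.
Qed.

Lemma lambda_period : lambda m = lambda 0.
Proof.
have p_dvd_m : (p %| m)%N by rewrite dvdn_exp //; case: s s_ge3 => [|[|]].
rewrite /lambda !expr0 !mulmx1 /=; congr blockrow; apply: pairB_basis_inj => // j.
- by rewrite pairB_delta_pow // -exprD !pairB_form0.
- by rewrite pairB_delta_pow // -exprD !pairB_form1 // -addnS dvdn_addr.
- rewrite pairB_utail // pairB0l add0r pairB0l upoly_period.
  have [h ->] := Spoly_mod_Cyclotomic.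
  have -> : p%:R * (h * 'Phi_(p ^ 2)) * 'X^(bexp p 2 j) =
           0 + p%:R * h * 'X^(bexp p 2 j) * 'Phi_(p ^ 2) by ring.
  by rewrite pairB_addmul pairB0r.
- rewrite pairB_utail // !pairB_bform upoly_period -pairBDr mulrA -mulrDl.
  by rewrite Hpoly_period mulrDl (mulrAC Spoly) pairB_addmul.
Qed.

End Orbit.

Section CoefficientRing.
Variable F : fieldType.
Hypothesis F_char0 : [pchar F] =i pred0.

Lemma natrF_eq0 k : (k%:R == 0 :> F) = (k == 0)%N.
Proof. by move/pcharf0P: F_char0. Qed.

Lemma intrF_inj : injective (fun z : int => z%:~R : F).
Proof.
move=> z1 z2 /= E; apply/eqP; rewrite -subr_eq0; apply/eqP.
have : (z1 - z2)%:~R = 0 :> F by rewrite rmorphB /= E subrr.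
case: (z1 - z2) => k /=; first by move/eqP; rewrite natrF_eq0 => /eqP->.
by rewrite NegzE rmorphN /= => /eqP; rewrite oppr_eq0 natrF_eq0.
Qed.

Definition is_subring (K : F -> Prop) : Prop :=
  [/\ K 1, (forall x y, K x -> K y -> K (x - y)) &
           (forall x y, K x -> K y -> K (x * y))].

Section Subring.
Variable K : F -> Prop.
Hypothesis K_subring : is_subring K.

Lemma subringB x y : K x -> K y -> K (x - y).
Proof. by case: K_subring => _ KB _; apply: KB. Qed.

Lemma subringM x y : K x -> K y -> K (x * y).
Proof. by case: K_subring => _ _ KM; apply: KM. Qed.

Lemma subring0 : K 0.
Proof. by case: K_subring => K1 _ _; rewrite -(subrr 1); apply: subringB. Qed.

Lemma subringN x : K x -> K (- x).
Proof. by rewrite -sub0r; apply: subringB subring0. Qed.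

Lemma subringD x y : K x -> K y -> K (x + y).
Proof. by move=> Kx Ky; rewrite -(opprK y); apply/subringB/subringN. Qed.

Lemma subring_int (z : int) : K z%:~R.
Proof.
have Knat k : K k%:R.
  elim: k => [|k IH]; first exact: subring0.
  by rewrite -addn1 natrD; apply: subringD => //; case: K_subring.
by case: z => k; [apply: Knat | rewrite NegzE rmorphN; apply/subringN/Knat].
Qed.

Lemma subring_sum (I : Type) (r : seq I) (P : pred I) (f : I -> F) :
  (forall i, P i -> K (f i)) -> K (\sum_(i <- r | P i) f i).
Proof. by move=> Kf; apply: (big_ind K) => //; [apply: subring0 | apply: subringD]. Qed.

End Subring.

Variable p : nat.
Hypothesis p_pr : prime p.

Lemma isZ_subring (K : F -> Prop) : isZ K -> is_subring K.
Proof.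
move=> KZ; split.
- by apply/KZ; exists 1.
- by move=> x y /KZ[a ->] /KZ[b ->]; apply/KZ; exists (a - b); rewrite rmorphB.
- by move=> x y /KZ[a ->] /KZ[b ->]; apply/KZ; exists (a * b); rewrite rmorphM.
Qed.

Lemma isZ_invp (K : F -> Prop) : isZ K -> ~ K (p%:R)^-1.
Proof.
move=> KZ /KZ[z Ez].
have p_neq0 : (p%:R : F) != 0 by rewrite natrF_eq0 -lt0n prime_gt0.
have : ((p%:Z * z)%:~R : F) = 1%:~R by rewrite rmorphM /= -Ez -pmulrn mulfV.
move/intrF_inj/(congr1 absz); rewrite abszM absz_nat /= => /eqP.
by rewrite muln_eq1 => /andP[/eqP p1 _]; move: p_pr; rewrite p1.
Qed.

Let intr_coprime_neq0 (b : int) : ~~ (p%:Z %| b)%Z -> (b%:~R : F) != 0.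
Proof. by apply: contra => /eqP/(@intrF_inj b 0)->; rewrite dvdz0. Qed.

Lemma isZloc_subring (K : F -> Prop) : isZloc p K -> is_subring K.
Proof.
have ndvdM (b d : int) : ~~ (p%:Z %| b)%Z -> ~~ (p%:Z %| d)%Z -> ~~ (p%:Z %| b * d)%Z.
  by rewrite !dvdzE abszM !absz_nat Euclid_dvdM // negb_or => -> ->.
move=> KL; split.
- apply/KL; exists 1, 1; rewrite divr1 dvdz1 /=; split=> //.
  by rewrite (gtn_eqF (prime_gt1 p_pr)).
- move=> x y /KL[a [b [pb ->]]] /KL[c [d [pd ->]]]; apply/KL.
  exists (a * d - c * b), (b * d); split; first exact: ndvdM.
  move: (intr_coprime_neq0 pb) (intr_coprime_neq0 pd).
  by rewrite rmorphB !rmorphM /= => b_neq0 d_neq0; field; apply/andP.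
- move=> x y /KL[a [b [pb ->]]] /KL[c [d [pd ->]]]; apply/KL.
  exists (a * c), (b * d); split; first exact: ndvdM.
  by rewrite !rmorphM /= invfM mulrACA.
Qed.

Lemma isZloc_invp (K : F -> Prop) : isZloc p K -> ~ K (p%:R)^-1.
Proof.
move=> KL /KL[a [b [pb Ez]]].
have : (b%:~R : F) = p%:R * a%:~R.
  rewrite -[a%:~R](divfK (intr_coprime_neq0 pb)) -Ez mulrA mulfV ?mul1r //.
  by rewrite natrF_eq0 -lt0n prime_gt0.
by rewrite pmulrn -rmorphM => /intrF_inj Eb; move: pb; rewrite /= Eb dvdz_mulr.
Qed.

Lemma Kspec_subring_invp (K : F -> Prop) : Kspec p K -> is_subring K /\ ~ K (p%:R)^-1.
Proof.
case=> [KZ|[KL|[K_subring K_invp _ _ _]]] //.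
- by split; [apply: isZ_subring | apply: isZ_invp].
- by split; [apply: isZloc_subring | apply: isZloc_invp].
Qed.

End CoefficientRing.

Lemma tens_delta_mx (R : pzRingType) m1 n1 m2 n2 (i : 'I_m1) (k : 'I_n1)
    (j : 'I_m2) (l : 'I_n2) :
  delta_mx i k *t delta_mx j l =
  delta_mx (mxtens_index (i, j)) (mxtens_index (k, l)) :> 'M[R]_(_, _).
Proof.
apply/matrixP => a b.
case: (mxtens_indexP a) => a1 a2; case: (mxtens_indexP b) => b1 b2.
rewrite tensmxE !mxE !(can_eq (@mxtens_indexK _ _)) !xpair_eqE.
by rewrite -natrM mulnb andbACA.
Qed.

Lemma map_mxX (R S : pzRingType) (f : {rmorphism R -> S}) n (A : 'M[R]_n) k :
  map_mx f (A ^+ k) = map_mx f A ^+ k.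
Proof.
elim: k => [|k IH]; first by rewrite !expr0 map_mx1.
by rewrite !exprS -!mulmxE map_mxM IH.
Qed.

Section FirstBasisVector.
Variables p s n : nat.
Hypothesis p_pr : prime p.
Local Notation N := n.+1.

Definition vfirstZ : 'cV[int]_(Ndim p s N) :=
  col_mx (col_mx ((delta_mx 0 0 : 'cV_N) *t coordB p 0 1) 0) 0.

Lemma coordB0_one : coordB p 0 1 = delta_mx 0 0.
Proof. by have := @coordB_basis p 0 p_pr ord0; rewrite expr0. Qed.

Lemma vfirstZ_delta :
  vfirstZ = delta_mx (lshift _ (lshift _ (mxtens_index (0, 0))))
                  (mxtens_index ((0 : 'I_1), (0 : 'I_1))).
Proof. by rewrite /vfirstZ coordB0_one tens_delta_mx -!delta_mx_ushift. Qed.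

Lemma map_vfirstZ (F : fieldType) : map_mx intr vfirstZ = vfirst F (Ndim p s N).
Proof.
rewrite vfirstZ_delta; apply/matrixP => i j; rewrite !mxE ord1.
rewrite -val_eqE -[0 == _]val_eqE /= mul0n addn0 andbT.
by case: eqP; rewrite ?rmorph1 ?rmorph0.
Qed.

Lemma DeltaA_vfirstZ : DeltaA p s N *m vfirstZ = vfirstZ.
Proof.
have fix1 : coordB p 0 ('X * 1) = coordB p 0 1.
  by have [h] := Xn_mod_Cyclotomic1 p 1; rewrite mulr1 expr1 => ->; rewrite coordB_addmul.
rewrite /DeltaA /Delta1 /Delta2 /Umx /deltan /vfirstZ.
rewrite !mul_block_col !mulmx0 !mul0mx !addr0.
congr (col_mx (col_mx _ _) _).
apply: etrans (tensmx_mul 1%:M (delta p 0) (delta_mx 0 0 : 'cV_N) (coordB p 0 1)) _.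
by rewrite mul1mx delta_coordB // fix1.
Qed.

Lemma DeltaA_pow_vfirstZ j : DeltaA p s N ^+ j *m vfirstZ = vfirstZ.
Proof.
elim: j => [|j IH]; first by rewrite mul1mx.
by rewrite exprS -mulmxE -mulmxA IH DeltaA_vfirstZ.
Qed.

Lemma lambda0_vfirstZ : (lambda p s n 0 *m vfirstZ) 0 0 = 1.
Proof.
rewrite vfirstZ_delta -colE mxE /lambda /blockrow !row_mxEl.
by rewrite mxE mxtens_indexK /= expr0 mulmx1 !mxE -val_eqE.
Qed.

End FirstBasisVector.

Section Cohomology.
Variables (F : fieldType) (K : F -> Prop) (p s n : nat).
Hypotheses (p_pr : prime p) (F_char0 : [pchar F] =i pred0) (K_subring : is_subring K).
Local Notation N := (Ndim p s n.+1).

Lemma natr_pexp_neq0 k : ((p ^ k)%:R : F) != 0.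
Proof. by rewrite natrF_eq0 // expn_eq0 negb_and -lt0n prime_gt0. Qed.

Lemma DeltaF_pow_vfirst j : DeltaF F p s n.+1 ^+ j *m vfirst F N = vfirst F N.
Proof. by rewrite -map_vfirstZ // /DeltaF -map_mxX -map_mxM DeltaA_pow_vfirstZ. Qed.

Lemma inM_vfirst : inM K (vfirst F N).
Proof.
move=> i; rewrite mxE; case: eqP => _; last exact: subring0.
by case: K_subring.
Qed.

Lemma inM_pairing (u : 'rV[int]_N) z : inM K z -> K ((map_mx intr u *m z) 0 0).
Proof.
move=> Kz; rewrite mxE; apply: subring_sum => // i _.
by apply: subringM => //; rewrite mxE; apply: subring_int.
Qed.

Lemma Tdelta_cocycle j k : (j < p ^ s)%N -> (k < p ^ s)%N ->
  inM K (Tdelta F p s n.+1 ((j + k) %% p ^ s)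
         - (DeltaF F p s n.+1 ^+ j *m Tdelta F p s n.+1 k + Tdelta F p s n.+1 j)).
Proof.
move=> lt_j lt_k i.
rewrite /Tdelta -scalemxAr DeltaF_pow_vfirst modn_mod.
rewrite (modn_small lt_j) (modn_small lt_k).
rewrite -!scalerDl -scalerBl mxE; apply: subringM => //; last exact: inM_vfirst.
set q := ((j + k) %/ p ^ s)%N; set r := ((j + k) %% p ^ s)%N.
have Er : (r%:R : F) = j%:R + k%:R - q%:R * (p ^ s)%:R.
  by rewrite -natrD -natrM {1}(divn_eq (j + k) (p ^ s)) natrD; ring.
have -> : r%:R / (p ^ s)%:R - (k%:R / (p ^ s)%:R + j%:R / (p ^ s)%:R) = - (q%:R : F).
  by rewrite Er; field; apply: natr_pexp_neq0.
by apply: subringN => //; apply: (subring_int K_subring q).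
Qed.

Lemma Tdelta_not_coboundary : (3 <= s)%N -> ~ K (p%:R)^-1 ->
  ~ (exists x : 'cV[F]_N,
       inM K (Tdelta F p s n.+1 (p ^ s.-1)
              - (DeltaF F p s n.+1 ^+ (p ^ s.-1) - 1%:M) *m x)).
Proof.
move=> s_ge3 K_invp [x /(inM_pairing (lambda p s n 0))].
set lambdaF := map_mx intr (lambda p s n 0).
have lambdaF_fixed : lambdaF *m DeltaF F p s n.+1 ^+ (p ^ s.-1) = lambdaF.
  rewrite /lambdaF /DeltaF -map_mxX -map_mxM lambda_mulDelta_pow //.
  by rewrite (lambda_period n p_pr s_ge3).
have lambdaF_v : (lambdaF *m vfirst F N) 0 0 = 1.
  by rewrite -map_vfirstZ // -map_mxM mxE lambda0_vfirstZ.
rewrite /Tdelta mulmxBr -scalemxAr mulmxA mulmxBr lambdaF_fixed mulmx1 subrr.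
rewrite mul0mx subr0 mxE lambdaF_v mulr1.
have s_gt0 : (0 < s)%N by apply: leq_trans s_ge3.
rewrite modn_small ?ltn_exp2l ?prime_gt1 ?ltn_predL //.
by rewrite -(prednK s_gt0) expnSr natrM invfM mulrA mulfV ?mul1r ?natr_pexp_neq0.
Qed.

End Cohomology.

Theorem lemma6 (p s n : nat) (F : fieldType) (K : F -> Prop) :
  prime p -> (3 <= s)%N -> (1 <= n)%N ->
  [pchar F] =i pred0 ->
  Kspec p K ->
  (forall j k : nat, (j < p ^ s)%N -> (k < p ^ s)%N ->
     inM K (Tdelta F p s n ((j + k) %% p ^ s)
            - (DeltaF F p s n ^+ j *m Tdelta F p s n k + Tdelta F p s n j)))
  /\
  ~ (exists x : 'cV[F]_(Ndim p s n),
       inM K (Tdelta F p s n (p ^ s.-1)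
              - (DeltaF F p s n ^+ (p ^ s.-1) - 1%:M) *m x)).
Proof.
move=> p_pr s_ge3 n_gt0 F_char0 K_spec.
case: n n_gt0 => [//|n] _.
have [K_subring K_invp] := Kspec_subring_invp F_char0 p_pr K_spec.
split; first exact: Tdelta_cocycle.
exact: Tdelta_not_coboundary.
Qed.
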